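(* Let $\mathcal{S}\subseteq\mathcal{P}_{fin}(\mathbb{N})$ be an IP set, let $\mathcal{B}\subseteq\mathcal{S}$ be finite, let $r\geq 1$, and let $c:NU(\mathcal{S})\rightarrow[1,r]$ be a coloring. Then at least one of the following holds: (1) there is a finite $\mathcal{D}\subseteq\mathcal{S}-\mathcal{B}$ such that for every $S\in(\mathcal{S}-\mathcal{B})-\mathcal{D}$ there is a $D\in NU(\mathcal{D})$ such that $\mathcal{B}$ does not half-match $D\cup S$; or (2) there is an IP set $\mathcal{T}\subseteq\mathcal{S}-\mathcal{B}$ such that $\mathcal{B}$ half-matches $\mathcal{T}$.
   Context: $\mathcal{P}_{fin}(\mathbb{N})$ is the set of finite subsets of $\mathbb{N}$. For $\mathcal{S}\subseteq\mathcal{P}_{fin}(\mathbb{N})$, $NU(\mathcal{S})$ denotes the set of non-empty sets which are unions of finitely many elements of $\mathcal{S}$. A set $\mathcal{S}\subseteq\mathcal{P}_{fin}(\mathbb{N})$ is an IP set if it is closed under finite unions and contains an infinite family of pairwise disjoint elements. For $B\in\mathcal{S}$, $\mathcal{S}-B:=\{T\in\mathcal{S}: T\cap B=\emptyset\}$, and for $\mathcal{B}\subseteq\mathcal{S}$, $\mathcal{S}-\mathcal{B}:=\bigcap_{B\in\mathcal{B}}(\mathcal{S}-B)$. Relative to a coloring $c$: a family $\mathcal{D}$ half-matches a set $B$ if there is $D\in\mathcal{D}$ with $c(B)=c(D\cup B)$; $\mathcal{D}$ half-matches a family $\mathcal{B}$ if it half-matches every $B\in\mathcal{B}$. *)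

(* Finite subsets of N are represented by their characteristic
   functions nat -> bool (with finite support); families of such sets are
   predicates on them. *)
From Stdlib Require Import List Bool Arith.

Definition setN := nat -> bool.

Definition is_finite (A : setN) : Prop := exists n, forall x, A x = true -> x < n.

Definition union (A B : setN) : setN := fun x => A x || B x.

Definition disjoint (A B : setN) : Prop := forall x, A x && B x = false.

Definition nonempty (A : setN) : Prop := exists x, A x = true.

Definition family := setN -> Prop.

Definition subfamily (F G : family) : Prop := forall A, F A -> G A.

Definition fin_family (F : family) : Prop := subfamily F is_finite.

Definition of_list (l : list setN) : family := fun A => In A l.

Definition bigunion (l : list setN) : setN :=
  fun x => existsb (fun A => A x) l.

Definition NU (S : family) : family :=
  fun T => nonempty T /\ exists l : list setN, (forall A, In A l -> S A) /\ T = bigunion l.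

Definition IP_set (S : family) : Prop :=
  fin_family S /\
  (forall A B, S A -> S B -> S (union A B)) /\
  exists f : nat -> setN,
    (forall i j, f i = f j -> i = j) /\
    (forall i, S (f i)) /\
    (forall i j, i <> j -> disjoint (f i) (f j)).

Definition minus_set (S : family) (B : setN) : family :=
  fun T => S T /\ disjoint T B.

Definition minus_fam (S : family) (Bs : family) : family :=
  fun T => S T /\ forall B, Bs B -> disjoint T B.

Definition half_matches_set (c : setN -> nat) (D : family) (B : setN) : Prop :=
  exists E, D E /\ c B = c (union E B).

Definition half_matches_fam (c : setN -> nat) (D : family) (Bs : family) : Prop :=
  forall B, Bs B -> half_matches_set c D B.

From Stdlib Require Import List Bool Btauto Arith Lia.
From Stdlib Require Import Classical ClassicalEpsilon FunctionalExtensionality.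

(* Suppose alternative (1) fails, i.e. no finite admissible
   family Dl (contained in S - B) is "blocking".  We build, by dependent
   choice, a sequence t_0, t_1, ... of nonempty members of S - B such that
   t_n is disjoint from t_0, ..., t_(n-1) and B half-matches every set
   (t_i1 ∪ ... ∪ t_ik) ∪ t_n with i1, ..., ik < n.  The family of all such
   sets is an IP set inside S - B which B half-matches: alternative (2).
   The extension step is the heart of the argument: given an admissible Dl,
   pick a nonempty G in S lying beyond every element of Dl and B (possible
   because an IP set contains infinitely many pairwise disjoint sets); since
   G :: Dl is not blocking, some T in S - B - (G :: Dl) is half-matched after
   adding any union D of members of G :: Dl, and then G ∪ T extends Dl. *)

Lemma bigunion_cons (A : setN) (l : list setN) (x : nat) :
  bigunion (A :: l) x = A x || bigunion l x.
Proof. reflexivity. Qed.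

Lemma bigunion_app (l l' : list setN) (x : nat) :
  bigunion (l ++ l') x = bigunion l x || bigunion l' x.
Proof. apply existsb_app. Qed.

Ltac set_eq :=
  let x := fresh "x" in
  extensionality x; unfold union; rewrite ?bigunion_cons, ?bigunion_app; simpl; btauto.

Lemma disjoint_sym (A B : setN) : disjoint A B -> disjoint B A.
Proof. intros h x. rewrite andb_comm. apply h. Qed.

Lemma disjoint_union (A B C : setN) :
  disjoint A C -> disjoint B C -> disjoint (union A B) C.
Proof. intros h1 h2 x. unfold union. rewrite andb_orb_distrib_l, h1, h2. reflexivity. Qed.

Lemma disjoint_bigunion (l : list setN) (B : setN) :
  (forall A, In A l -> disjoint A B) -> disjoint (bigunion l) B.
Proof.
  induction l as [|A l IH]; intros Hl x; [reflexivity|].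
  rewrite bigunion_cons, andb_orb_distrib_l, (Hl A (or_introl eq_refl) x).
  apply IH. intros A' HA'. apply Hl. right. exact HA'.
Qed.

Lemma union_closed_bigunion (S : family) :
  (forall A B, S A -> S B -> S (union A B)) ->
  forall l Y, (forall A, In A l -> S A) -> S Y -> S (union (bigunion l) Y).
Proof.
  intros Hu. induction l as [|A l IH]; intros Y Hl HY.
  - replace (union (bigunion nil) Y) with Y by set_eq. exact HY.
  - replace (union (bigunion (A :: l)) Y) with (union A (union (bigunion l) Y)) by set_eq.
    apply Hu; [apply Hl; left; reflexivity|].
    apply IH; [intros A' HA'; apply Hl; right; exact HA'|exact HY].
Qed.

Lemma distinct_union_nonempty (A B : setN) : A <> B -> nonempty (union A B).
Proof.
  intros Hne. apply NNPP. intros Hempty. apply Hne. extensionality x.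
  assert (HA : A x = false) by (destruct (A x) eqn:E; auto; exfalso; apply Hempty;
    exists x; unfold union; rewrite E; reflexivity).
  assert (HB : B x = false) by (destruct (B x) eqn:E; auto; exfalso; apply Hempty;
    exists x; unfold union; rewrite E, orb_true_r; reflexivity).
  congruence.
Qed.

Lemma bounded_far_disjoint (A G : setN) (M : nat) :
  (forall x, A x = true -> x < M) -> (forall x, G x = true -> M <= x) -> disjoint G A.
Proof.
  intros HA HG x. destruct (G x) eqn:EG; [|reflexivity].
  destruct (A x) eqn:EA; [|reflexivity].
  specialize (HA x EA). specialize (HG x EG). lia.
Qed.

Lemma finite_list_bound (l : list setN) :
  (forall A, In A l -> is_finite A) -> exists M, forall A x, In A l -> A x = true -> x < M.
Proof.
  induction l as [|A l IH]; intros Hl.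
  - exists 0. intros A x [].
  - destruct IH as [M HM]; [intros A' HA'; apply Hl; right; exact HA'|].
    destruct (Hl A (or_introl eq_refl)) as [N HN].
    exists (M + N). intros B x [<-|HB] Hx.
    + specialize (HN x Hx). lia.
    + specialize (HM B x HB Hx). lia.
Qed.

(* In a sequence of pairwise disjoint sets, arbitrarily late members lie
   beyond any given bound M: each point of N is used by at most one member. *)
Lemma disjoint_sequence_far (g : nat -> setN) :
  (forall i j, i <> j -> disjoint (g i) (g j)) ->
  forall M k, exists i, k <= i /\ forall x, g i x = true -> M <= x.
Proof.
  intros Hd M. induction M as [|M IH]; intros k.
  - exists k. split; [reflexivity|lia].
  - destruct (IH k) as [i [Hki Hi]]. destruct (g i M) eqn:EiM.
    + destruct (IH (Datatypes.S i)) as [j [Hij Hj]]. exists j. split; [lia|].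
      intros x Hx. specialize (Hj x Hx).
      destruct (Nat.eq_dec x M) as [->|]; [|lia].
      specialize (Hd i j ltac:(lia) M). rewrite EiM, Hx in Hd. discriminate.
    + exists i. split; [exact Hki|]. intros x Hx. specialize (Hi x Hx).
      destruct (Nat.eq_dec x M) as [->|]; [congruence|lia].
Qed.

(* An IP set has nonempty members beyond any bound: the union of two distinct
   far members of its disjoint sequence. *)
Lemma IP_far_member (S : family) :
  IP_set S -> forall M, exists G, S G /\ nonempty G /\ forall x, G x = true -> M <= x.
Proof.
  intros [_ [Hu [f [Finj [FS Fd]]]]] M.
  destruct (disjoint_sequence_far f Fd M 0) as [i [_ Hi]].
  destruct (disjoint_sequence_far f Fd M (Datatypes.S i)) as [j [Hij Hj]].
  exists (union (f i) (f j)). split; [|split].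
  - apply Hu; apply FS.
  - apply distinct_union_nonempty. intros Heq. apply Finj in Heq. lia.
  - intros x. unfold union. destruct (f i x) eqn:E; simpl; [intros _; apply Hi, E|apply Hj].
Qed.

Section HalfMatching.

Variables (S : family) (Bl : list setN) (c : setN -> nat).
Hypothesis hS : IP_set S.
Hypothesis hB : subfamily (of_list Bl) S.

Definition admissible (Dl : list setN) : Prop :=
  subfamily (of_list Dl) (minus_fam S (of_list Bl)).

Definition blocking (Dl : list setN) : Prop :=
  admissible Dl /\
  forall T, minus_fam (minus_fam S (of_list Bl)) (of_list Dl) T ->
    exists D, NU (of_list Dl) D /\ ~ half_matches_set c (of_list Bl) (union D T).

Definition extends (Dl : list setN) (T : setN) : Prop :=
  minus_fam (minus_fam S (of_list Bl)) (of_list Dl) T /\ nonempty T /\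
  forall l, incl l Dl -> half_matches_set c (of_list Bl) (union (bigunion l) T).

Lemma not_blocking_witness (Dl : list setN) :
  admissible Dl -> ~ blocking Dl ->
  exists T, minus_fam (minus_fam S (of_list Bl)) (of_list Dl) T /\
    forall D, NU (of_list Dl) D -> half_matches_set c (of_list Bl) (union D T).
Proof.
  intros Hadm Hnb. apply NNPP. intros Hno. apply Hnb. split; [exact Hadm|].
  intros T HT. apply NNPP. intros HnoD. apply Hno. exists T. split; [exact HT|].
  intros D HD. apply NNPP. intros Hnh. apply HnoD. exists D. split; assumption.
Qed.

Lemma cons_bigunion_NU (G : setN) (Dl l : list setN) :
  nonempty G -> incl l Dl -> NU (of_list (G :: Dl)) (bigunion (G :: l)).
Proof.
  intros [x Hx] Hl. split.
  - exists x. rewrite bigunion_cons, Hx. reflexivity.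
  - exists (G :: l). split; [|reflexivity].
    intros A [<-|HA]; [left; reflexivity|right; apply Hl, HA].
Qed.

Lemma admissible_extends (Hnb : forall Dl, ~ blocking Dl) (Dl : list setN) :
  admissible Dl -> exists T, extends Dl T.
Proof.
  intros Hadm. destruct hS as [Hfin [Hu _]].
  destruct (finite_list_bound (Dl ++ Bl)) as [M HM].
  { intros A HA. apply Hfin. apply in_app_or in HA as [HA|HA]; [apply (Hadm A HA)|apply hB, HA]. }
  destruct (IP_far_member S hS M) as [G [GS [Gne Gfar]]].
  assert (Gd : forall A, In A (Dl ++ Bl) -> disjoint G A).
  { intros A HA. apply (bounded_far_disjoint A G M); [|exact Gfar]. intros x; apply HM, HA. }
  assert (Hadm' : admissible (G :: Dl)).
  { intros A [<-|HA]; [|apply Hadm, HA].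
    split; [exact GS|]. intros B HB. apply Gd, in_or_app. right. exact HB. }
  destruct (not_blocking_witness (G :: Dl) Hadm' (Hnb _)) as [T [[[TS TB] TD] Thm]].
  exists (union G T). split; [split; [split|]|split].
  - apply Hu; assumption.
  - intros B HB. apply disjoint_union; [apply Gd, in_or_app; right; exact HB|apply TB, HB].
  - intros A HA. apply disjoint_union; [apply Gd, in_or_app; left; exact HA|].
    apply TD. right. exact HA.
  - destruct Gne as [x Hx]. exists x. unfold union. rewrite Hx. reflexivity.
  - intros l Hl. replace (union (bigunion l) (union G T)) with (union (bigunion (G :: l)) T)
      by set_eq.
    apply Thm, cons_bigunion_NU; assumption.
Qed.

(* The sequence built from a choice of extensions [next]: history n lists
   t_(n-1), ..., t_0, and t_n := next (history n). *)
Fixpoint history (next : list setN -> setN) (n : nat) : list setN :=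
  match n with
  | 0 => nil
  | Datatypes.S n => next (history next n) :: history next n
  end.

Lemma in_history (next : list setN -> setN) (m n : nat) :
  m < n -> In (next (history next m)) (history next n).
Proof.
  induction n as [|n IH]; intros Hmn; [lia|]. simpl.
  destruct (Nat.eq_dec m n) as [->|]; [left; reflexivity|right; apply IH; lia].
Qed.

Lemma history_mono (next : list setN -> setN) (m n : nat) :
  m <= n -> incl (history next m) (history next n).
Proof.
  induction n as [|n IH]; intros Hmn.
  - replace m with 0 by lia. apply incl_refl.
  - destruct (Nat.eq_dec m (Datatypes.S n)) as [->|]; [apply incl_refl|].
    apply incl_tl, IH. lia.
Qed.

Section Construction.

Variable next : list setN -> setN.
Hypothesis Hnext : forall Dl, admissible Dl -> extends Dl (next Dl).

Let term (n : nat) : setN := next (history next n).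

Lemma history_admissible (n : nat) : admissible (history next n).
Proof.
  induction n as [|n IH]; intros A HA; [destruct HA|].
  destruct HA as [<-|HA]; [apply (Hnext _ IH)|apply IH, HA].
Qed.

Lemma term_extends (n : nat) : extends (history next n) (term n).
Proof. apply Hnext, history_admissible. Qed.

Lemma terms_disjoint (m n : nat) : m <> n -> disjoint (term m) (term n).
Proof.
  assert (Hlt : forall i j, i < j -> disjoint (term i) (term j)).
  { intros i j Hij. apply disjoint_sym. destruct (term_extends j) as [[_ Hd] _].
    apply Hd, in_history, Hij. }
  intros Hmn. destruct (Nat.lt_gt_cases m n) as [[Hlt'|Hgt] _]; [exact Hmn|..].
  - apply Hlt, Hlt'.
  - apply disjoint_sym, Hlt, Hgt.
Qed.

(* Distinct terms are disjoint and nonempty, hence different. *)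
Lemma terms_injective (m n : nat) : term m = term n -> m = n.
Proof.
  intros Heq. apply NNPP. intros Hmn.
  destruct (term_extends n) as [_ [[x Hx] _]].
  specialize (terms_disjoint m n Hmn x). rewrite Heq, Hx. discriminate.
Qed.

Definition generated (X : setN) : Prop :=
  exists n l, incl l (history next n) /\ X = union (bigunion l) (term n).

Lemma generated_term (n : nat) : generated (term n).
Proof. exists n, nil. split; [intros A []|set_eq]. Qed.

Lemma generated_in_minus (X : setN) : generated X -> minus_fam S (of_list Bl) X.
Proof.
  intros [n [l [Hl ->]]]. destruct (term_extends n) as [[[TS TB] _] _].
  assert (Hl' : forall A, In A l -> minus_fam S (of_list Bl) A)
    by (intros A HA; apply (history_admissible n), Hl, HA).
  split.
  - apply union_closed_bigunion; [apply hS| |exact TS]. intros A HA. apply Hl', HA.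
  - intros B HB. apply disjoint_union; [|apply TB, HB].
    apply disjoint_bigunion. intros A HA. apply (Hl' A HA), HB.
Qed.

Lemma generated_union_lt (n n' : nat) (l l' : list setN) :
  n < n' -> incl l (history next n) -> incl l' (history next n') ->
  generated (union (union (bigunion l) (term n)) (union (bigunion l') (term n'))).
Proof.
  intros Hnn Hl Hl'. exists n', (term n :: l ++ l'). split; [|set_eq].
  intros A [<-|HA]; [apply in_history, Hnn|].
  apply in_app_or in HA as [HA|HA]; [|apply Hl', HA].
  apply (history_mono next n n'); [lia|apply Hl, HA].
Qed.

Lemma generated_union (X X' : setN) : generated X -> generated X' -> generated (union X X').
Proof.
  intros [n [l [Hl ->]]] [n' [l' [Hl' ->]]].
  destruct (lt_eq_lt_dec n n') as [[Hnn|<-]|Hnn].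
  - apply generated_union_lt; assumption.
  - exists n, (l ++ l'). split; [|set_eq].
    intros A HA. apply in_app_or in HA as [HA|HA]; [apply Hl, HA|apply Hl', HA].
  - replace (union (union (bigunion l) (term n)) (union (bigunion l') (term n')))
      with (union (union (bigunion l') (term n')) (union (bigunion l) (term n))) by set_eq.
    apply generated_union_lt; assumption.
Qed.

Lemma generated_IP : IP_set generated.
Proof.
  split; [|split].
  - intros X HX. apply (proj1 hS), (generated_in_minus X HX).
  - exact generated_union.
  - exists term. split; [exact terms_injective|split; [exact generated_term|exact terms_disjoint]].
Qed.

Lemma generated_half_matched : half_matches_fam c (of_list Bl) generated.
Proof.
  intros X [n [l [Hl ->]]]. destruct (term_extends n) as [_ [_ Hm]]. apply Hm, Hl.
Qed.

End Construction.

End HalfMatching.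

Theorem lemma2p1 (S : family) (Bl : list setN) (r : nat) (c : setN -> nat)
  (hS : IP_set S)
  (hB : subfamily (of_list Bl) S)
  (hr : 1 <= r)
  (hc : forall T, NU S T -> 1 <= c T <= r) :
  (exists Dl : list setN,
      subfamily (of_list Dl) (minus_fam S (of_list Bl)) /\
      forall T, minus_fam (minus_fam S (of_list Bl)) (of_list Dl) T ->
        exists D, NU (of_list Dl) D /\
          ~ half_matches_set c (of_list Bl) (union D T))
  \/
  (exists TT : family,
      IP_set TT /\ subfamily TT (minus_fam S (of_list Bl)) /\
      half_matches_fam c (of_list Bl) TT).
Proof.
  destruct (classic (exists Dl, blocking S Bl c Dl)) as [Hblock|Hnone]; [left; exact Hblock|right].
  assert (Hnb : forall Dl, ~ blocking S Bl c Dl) by (intros Dl HDl; apply Hnone; exists Dl; exact HDl).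
  destruct (choice (fun Dl T => admissible S Bl Dl -> extends S Bl c Dl T)) as [next Hnext].
  { intros Dl. destruct (classic (admissible S Bl Dl)) as [Hadm|Hnadm].
    - destruct (admissible_extends S Bl c hS hB Hnb Dl Hadm) as [T HT]. exists T. intros _. exact HT.
    - exists (bigunion Dl). intros Hadm. contradiction. }
  exists (generated next). split; [|split].
  - exact (generated_IP S Bl c hS next Hnext).
  - exact (generated_in_minus S Bl c hS next Hnext).
  - exact (generated_half_matched S Bl c next Hnext).
Qed.
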